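(* Let $k\ge2$, $r_0>0$, and let $\mathfrak X\subset\mathbb R^k$ be a polar-coordinate grid: choose $M$ points $q_1,\dots,q_M$ on the sphere of radius $r_0$ centered at the origin, containing $k-1$ linearly independent vectors, and radii $0<\mathsf r_1<\dots<\mathsf r_\alpha=r_0$, and let $\mathfrak X=\{(\mathsf r_a/r_0)q_m: 1\le a\le\alpha,1\le m\le M\}$, so $p=M\alpha$ points. Let $\mathcal T^{(k)}_{\mathrm{exact}}$ be the set of rotations $\mathtt O\in SO(k)$ mapping $\mathfrak X$ onto itself, and $\mathcal T_{\mathrm{exact}}$ the set of their companion $p\times p$ matrices. Then $$|\mathcal T^{(k)}_{\mathrm{exact}}|=|\mathcal T_{\mathrm{exact}}|=O(p^{k-1}),$$ and the elements of $\mathcal T_{\mathrm{exact}}$ are permutation matrices; in particular they are orthogonal.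
   Context: An image on the grid is a vector $v\in\mathbb R^p$ whose entries are values at the grid points $x_1,\dots,x_p$. For a rotation $\mathtt O$ mapping $\mathfrak X$ onto itself, its companion matrix is the $p\times p$ matrix $P_{\mathtt O}$ with $(P_{\mathtt O}v)_a=v_b$ where $x_b=\mathtt O^{-1}x_a$, i.e. the matrix implementing the action $v\mapsto\mathtt O\circ v$ of the rotation on discretized images. $O(p^{k-1})$ refers to $p\to\infty$ with $k$ fixed (in fact the proof gives $|\mathcal T^{(k)}_{\mathrm{exact}}|\le M^{k-1}$). *)

From HB Require Import structures.
From mathcomp Require Import all_boot all_order all_algebra all_fingroup.
From mathcomp Require Import reals.
Set Implicit Arguments. Unset Strict Implicit. Unset Printing Implicit Defensive.
Import Order.TTheory GRing.Theory Num.Theory.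
Local Open Scope ring_scope.

Definition norm2 (R : realType) k (v : 'cV[R]_k) : R := \sum_(i < k) v i 0 ^+ 2.

Definition is_rotation (R : realType) k (O : 'M[R]_k) : Prop :=
  O^T *m O = 1%:M /\ \det O = 1.

Definition maps_onto (R : realType) k p (x : 'I_p -> 'cV[R]_k) (O : 'M[R]_k) : Prop :=
  (forall i, exists j, O *m x i = x j) /\ (forall j, exists i, O *m x i = x j).

(* companion matrix: (P_O)_{a b} = 1 iff x_b = O^{-1} x_a, so (P_O v)_a = v_b *)
Definition companion (R : realType) k p (x : 'I_p -> 'cV[R]_k) (O : 'M[R]_k) : 'M[R]_p :=
  \matrix_(a < p, b < p) (if x b == invmx O *m x a then 1 else 0).

Definition grid_point (R : realType) k alpha M (r0 : R) (r : 'I_alpha -> R)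
  (q : 'I_M -> 'cV[R]_k) (am : 'I_alpha * 'I_M) : 'cV[R]_k :=
  (r am.1 / r0) *: q am.2.

Definition has_card (T : eqType) (P : T -> Prop) (n : nat) : Prop :=
  exists s : seq T, uniq s /\ size s = n /\ (forall t, P t <-> t \in s).

Definition orthogonal_mx (R : realType) n (P : 'M[R]_n) : Prop := P^T *m P = 1%:M.

From Stdlib Require Import Classical.
From mathcomp Require Import all_boot all_order all_algebra all_fingroup.
From mathcomp Require Import reals.
Import Order.TTheory GRing.Theory Num.Theory.
Set Implicit Arguments. Unset Strict Implicit. Unset Printing Implicit Defensive.
Local Open Scope ring_scope.

(* A rotation of R^k is determined by its values on k-1 linearly independent
   vectors: if U in SO(k) fixes the rows of a row-free (k-1) x k matrix A and w
   spans the kernel of A, the determinant of [w^T; A] U [w^T; A]^T forces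
   w^T U w = |w|^2, hence U w = w and U = 1.  The outer sphere of the grid is
   {q_m}, so a symmetry O is determined by where it sends the k-1 independent
   points q_(f i) among the p grid points: at most p^(k-1) choices.  Its
   companion matrix is the permutation matrix of j |-> index of O^-1 x_j, and
   it still determines O on the points q_(f i), so both sets have the same size. *)

Lemma mulmx_trmx_eq0 (R : realDomainType) n (v : 'rV[R]_n) :
  (v *m v^T == 0) = (v == 0).
Proof.
apply/eqP/eqP => [vv0|->]; last by rewrite mul0mx.
apply/rowP => j; rewrite mxE.
have /eqP := congr1 (fun S : 'M_1 => S 0 0) vv0; rewrite !mxE.
under eq_bigr do rewrite mxE -expr2.
rewrite psumr_eq0 => [/allP/(_ j)|i _]; last exact: sqr_ge0.
by rewrite mem_index_enum sqrf_eq0 => /(_ isT)/eqP.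
Qed.

Lemma gram_unitmx (R : realFieldType) m n (A : 'M[R]_(m, n)) :
  row_free A -> A *m A^T \in unitmx.
Proof.
move=> A_free; rewrite -row_free_unit -kermx_eq0; apply/rowV0Pn.
case=> y /sub_kermxP yG; apply/negP/negPn/eqP.
suff yA : y *m A = 0 by apply: (row_free_inj A_free); rewrite yA mul0mx.
by apply/eqP; rewrite -mulmx_trmx_eq0 trmx_mul mulmxA -(mulmxA y) yG mul0mx.
Qed.

Section RotationFixingHyperplane.

Variables (R : realFieldType) (n : nat) (A : 'M[R]_(n, n.+1)) (U : 'M[R]_n.+1).
Hypotheses (A_free : row_free A) (U_orth : U^T *m U = 1%:M) (U_det : \det U = 1).
Hypothesis U_fix : U *m A^T = A^T.

Lemma mulmx_fixed_rows : A *m U = A.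
Proof.
apply: (can_inj trmxK); rewrite trmx_mul.
by rewrite -[in LHS]U_fix mulmxA U_orth mul1mx.
Qed.

Lemma gram_col_mx (w : 'cV[R]_n.+1) (V : 'M[R]_n.+1) :
    A *m w = 0 -> A *m V = A -> V *m A^T = A^T ->
  col_mx w^T A *m V *m (col_mx w^T A)^T
    = block_mx (w^T *m V *m w) 0 0 (A *m A^T).
Proof.
move=> Aw AV VA.
have wA : w^T *m A^T = 0 by rewrite -trmx_mul Aw trmx0.
rewrite mul_col_mx tr_col_mx trmxK mul_col_row AV Aw.
by rewrite -(mulmxA w^T V A^T) VA wA.
Qed.

Let gram_det_neq0 : \det (A *m A^T) != 0.
Proof. by rewrite -unitfE -unitmxE gram_unitmx. Qed.

Lemma orthogonal_fix_kernel (w : 'cV[R]_n.+1) : A *m w = 0 -> U *m w = w.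
Proof.
move=> Aw.
(* [B U B^T] and [B B^T] are block diagonal for [B = col_mx w^T A]; equal determinants isolate [w^T U w]. *)
have wUw : w^T *m U *m w = w^T *m w.
  pose B := col_mx w^T A.
  have D : \det (B *m U *m B^T) = \det (B *m B^T) by rewrite !det_mulmx U_det mulr1.
  have := gram_col_mx Aw (mulmx1 A) (mul1mx A^T); rewrite !mulmx1 => BB.
  move: D; rewrite gram_col_mx ?mulmx_fixed_rows // BB !det_ublock !det_mx11.
  by move/(mulIf gram_det_neq0) => D; apply/matrixP => i j; rewrite !ord1.
have trwUw : w^T *m U^T *m w = w^T *m w.
  have -> : w^T *m U^T *m w = (w^T *m U *m w)^T by rewrite !trmx_mul trmxK mulmxA.
  by rewrite wUw; apply/matrixP => i j; rewrite !ord1 mxE.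
apply/eqP; rewrite -subr_eq0 -trmx_eq0 -mulmx_trmx_eq0 trmxK.
rewrite [(_ - w)^T]linearB /= trmx_mul mulmxBl !mulmxBr.
rewrite mulmxA -(mulmxA _ U^T) U_orth mulmx1 trwUw mulmxA wUw.
by rewrite !subrr.
Qed.

Lemma rotation_fixing_rows_eq1 : U = 1%:M.
Proof.
have [w Aw w_nz] : exists2 w : 'cV_n.+1, A *m w = 0 & w != 0.
  have : ~~ row_free A^T by rewrite /row_free mxrank_tr (eqP A_free) ltn_eqF.
  rewrite -kermx_eq0 => /rowV0Pn[z /sub_kermxP zA z_nz].
  by exists z^T; rewrite ?trmx_eq0 // -[A]trmxK -trmx_mul zA trmx0.
pose B := col_mx w^T A.
have BB : B *m B^T = block_mx (w^T *m w) 0 0 (A *m A^T).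
  by have := gram_col_mx Aw (mulmx1 A) (mul1mx A^T); rewrite !mulmx1.
have ww_nz : \det (w^T *m w) != 0.
  have : w^T *m w != 0 by rewrite -[w in _ *m w]trmxK mulmx_trmx_eq0 trmx_eq0.
  by rewrite det_mx11; apply: contraNneq => ww0; apply/eqP; rewrite [LHS]mx11_scalar ww0 raddf0.
have B_unit : B^T \in unitmx.
  rewrite unitmxE unitfE; apply: contra_neq (mulf_neq0 ww_nz gram_det_neq0) => BT0.
  by rewrite -(det_ublock _ 0) -BB det_mulmx BT0 mulr0.
have UB : U *m B^T = B^T.
  by rewrite /B tr_col_mx trmxK mul_mx_row orthogonal_fix_kernel // U_fix.
by rewrite -[U]mulmx1 -(mulmxV B_unit) mulmxA UB.
Qed.

End RotationFixingHyperplane.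

Lemma rotation_eq_on_rows (R : realType) n (A : 'M[R]_(n, n.+1)) (O1 O2 : 'M[R]_n.+1) :
  row_free A -> is_rotation O1 -> is_rotation O2 -> O1 *m A^T = O2 *m A^T -> O1 = O2.
Proof.
move=> A_free [O1_orth O1_det] [O2_orth O2_det] OA.
have O2_orthC : O2 *m O2^T = 1%:M by apply: mulmx1C.
suff U1 : O2^T *m O1 = 1%:M by rewrite -[O1]mul1mx -O2_orthC -mulmxA U1 mulmx1.
apply: (rotation_fixing_rows_eq1 A_free).
- by rewrite trmx_mul trmxK mulmxA -(mulmxA O1^T) O2_orthC mulmx1.
- by rewrite det_mulmx det_tr O1_det O2_det mulr1.
- by rewrite -mulmxA OA mulmxA O2_orth mul1mx.
Qed.

Lemma seq_of_inj_preimage (T F : eqType) (P : T -> Prop) (c : T -> F) (L : seq F) :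
    (forall t1 t2, P t1 -> P t2 -> c t1 = c t2 -> t1 = t2) ->
  exists s : seq T, [/\ uniq s, (size s <= size L)%N &
    forall t, P t /\ c t \in L <-> t \in s].
Proof.
move=> c_inj; elim: L => [|a L [s [s_uniq s_size s_mem]]].
  by exists [::]; split => // t; split => [[]|].
have [[t0 [Pt0 ct0]]|no_t] := classic (exists t, P t /\ c t = a); last first.
  exists s; split => [//||t]; first exact: leqW.
  rewrite in_cons; split=> [[Pt /orP[/eqP cta|ctL]]|/s_mem[Pt ctL]].
  - by case: no_t; exists t.
  - exact/s_mem.
  - by rewrite ctL orbT.
exists (undup (t0 :: s)); split=> [||t]; first exact: undup_uniq.
  by apply: leq_trans (size_undup _) _; rewrite ltnS.
rewrite mem_undup !in_cons; split=> [[Pt /orP[/eqP cta|ctL]]|/orP[/eqP->|/s_mem[Pt ctL]]].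
- by rewrite (c_inj t t0) ?eqxx // cta.
- by apply/orP; right; apply/s_mem.
- by rewrite ct0 eqxx.
- by rewrite ctL orbT.
Qed.

Lemma has_card_inj_fin (T : eqType) (F : finType) (P : T -> Prop) (c : T -> F) :
    (forall t1 t2, P t1 -> P t2 -> c t1 = c t2 -> t1 = t2) ->
  exists2 n, has_card P n & (n <= #|F|)%N.
Proof.
move=> c_inj; have [s [s_uniq s_size s_mem]] := seq_of_inj_preimage (enum F) c_inj.
exists (size s); last by rewrite cardE.
exists s; do 2!split=> //; move=> t; rewrite -s_mem mem_enum.
by split=> [|[]].
Qed.

Lemma has_card_image (T U : eqType) (P : T -> Prop) (f : T -> U) n :
    (forall t1 t2, P t1 -> P t2 -> f t1 = f t2 -> t1 = t2) ->
  has_card P n -> has_card (fun u => exists t, P t /\ u = f t) n.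
Proof.
move=> f_inj [s [s_uniq [<- s_mem]]]; exists (map f s); rewrite size_map.
split; first by rewrite map_inj_in_uniq // => t1 t2 /s_mem ? /s_mem; apply: f_inj.
split=> // u; split=> [[t [/s_mem ? ->]]|/mapP[t /s_mem ? ->]]; first exact: map_f.
by exists t.
Qed.

Lemma perm_mx_orthogonal (R : realType) n (s : 'S_n) : orthogonal_mx (perm_mx s : 'M[R]_n).
Proof. by rewrite /orthogonal_mx tr_perm_mx -perm_mxM mulVg perm_mx1. Qed.

Lemma companion_perm_mx (R : realType) k p (x : 'I_p -> 'cV[R]_k) (O : 'M[R]_k) :
    injective x -> O \in unitmx -> (forall j, exists i, O *m x i = x j) ->
  exists s : 'S_p, companion x O = perm_mx s.
Proof.
move=> x_inj O_unit onto.
pose preimage j := odflt j [pick i | x i == invmx O *m x j].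
have preimageP j : x (preimage j) = invmx O *m x j.
  rewrite /preimage; case: pickP => [i /eqP //|no_i].
  have [i Oi] := onto j; move: (no_i i).
  by rewrite -Oi mulKmx // eqxx.
have preimage_inj : injective preimage.
  move=> j1 j2 /(congr1 x); rewrite !preimageP => /(can_inj (mulKVmx O_unit)).
  exact: x_inj.
exists (perm preimage_inj); apply/matrixP => a b.
by rewrite !mxE permE -preimageP (inj_eq x_inj) eq_sym; case: eqP.
Qed.

Lemma rotation_unitmx (R : realType) k (O : 'M[R]_k) : is_rotation O -> O \in unitmx.
Proof. by case=> _ O_det; rewrite unitmxE O_det unitr1. Qed.

Section RotationsOfPointSet.

Variables (R : realType) (n p : nat) (x : 'I_p -> 'cV[R]_n.+1) (f : 'I_n -> 'I_p).
Hypothesis frame_free : row_free (\matrix_(i < n) (x (f i))^T).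

Lemma rotation_eq_on_frame (O1 O2 : 'M[R]_n.+1) :
    is_rotation O1 -> is_rotation O2 ->
  (forall i, O1 *m x (f i) = O2 *m x (f i)) -> O1 = O2.
Proof.
move=> O1_rot O2_rot O12; apply: rotation_eq_on_rows frame_free O1_rot O2_rot _.
apply: (can_inj trmxK); rewrite !trmx_mul !trmxK; apply/row_matrixP => i.
by rewrite !row_mul rowK -!trmx_mul O12.
Qed.

Definition frame_image (O : 'M[R]_n.+1) : {ffun 'I_n -> 'I_p} :=
  [ffun i => odflt (f i) [pick j | O *m x (f i) == x j]].

Lemma frame_imageP (O : 'M[R]_n.+1) i : maps_onto x O -> O *m x (f i) = x (frame_image O i).
Proof.
case=> O_into _; rewrite ffunE; case: pickP => [j /eqP //|no_j].
by have [j Oj] := O_into (f i); move: (no_j j); rewrite Oj eqxx.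
Qed.

Lemma frame_image_inj (O1 O2 : 'M[R]_n.+1) :
    is_rotation O1 /\ maps_onto x O1 -> is_rotation O2 /\ maps_onto x O2 ->
  frame_image O1 = frame_image O2 -> O1 = O2.
Proof.
move=> [O1_rot O1_onto] [O2_rot O2_onto] eq_im.
by apply: rotation_eq_on_frame => // i; rewrite !frame_imageP // eq_im.
Qed.

Lemma has_card_rotations_onto :
  exists2 N, has_card (fun O => is_rotation O /\ maps_onto x O) N & (N <= p ^ n)%N.
Proof.
have [N cardN N_le] := has_card_inj_fin frame_image_inj.
by exists N; rewrite // card_ffun !card_ord in N_le.
Qed.

Lemma companion_inj_on_rotations_onto (O1 O2 : 'M[R]_n.+1) :
    is_rotation O1 /\ maps_onto x O1 -> is_rotation O2 /\ maps_onto x O2 ->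
  companion x O1 = companion x O2 -> O1 = O2.
Proof.
move=> [O1_rot O1_onto] [O2_rot O2_onto] eq_comp.
apply: rotation_eq_on_frame => // i.
have O1_fi := frame_imageP i O1_onto; set j := frame_image O1 i in O1_fi *.
have O1_inv : invmx O1 *m x j = x (f i) by rewrite -O1_fi mulKmx ?rotation_unitmx.
have := congr1 (fun P : 'M_p => P j (f i)) eq_comp; rewrite !mxE O1_inv eqxx.
case: eqP => [O2_fi _|_ /eqP]; last by rewrite oner_eq0.
by rewrite O1_fi O2_fi mulKVmx ?rotation_unitmx.
Qed.

End RotationsOfPointSet.

Lemma norm2Z (R : realType) k (c : R) (v : 'cV[R]_k) : norm2 (c *: v) = c ^+ 2 * norm2 v.
Proof. by rewrite /norm2 mulr_sumr; apply: eq_bigr => i _; rewrite mxE exprMn. Qed.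

Section PolarGrid.

Variables (R : realType) (k alpha M : nat) (r0 : R) (r : 'I_alpha -> R) (q : 'I_M -> 'cV[R]_k).
Hypotheses (r0_gt0 : 0 < r0) (q_norm : forall m, norm2 (q m) = r0 ^+ 2).

Lemma norm2_grid_point am : norm2 (grid_point r0 r q am) = r am.1 ^+ 2.
Proof. by rewrite norm2Z q_norm -exprMn divfK ?gt_eqF. Qed.

Lemma grid_point_inj :
  injective q -> (forall a, 0 < r a) -> injective r -> injective (grid_point r0 r q).
Proof.
move=> q_inj r_gt0 r_inj [a m] [b m'] eq_ab.
have eq_r : r a = r b.
  apply/eqP; rewrite -(@eqrXn2 _ 2) ?ltW //.
  by rewrite -(norm2_grid_point (a, m)) -(norm2_grid_point (b, m')) eq_ab.
have {}eq_r := r_inj _ _ eq_r; subst b; congr (_, _); apply: q_inj.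
by apply: scalerI eq_ab; rewrite mulf_neq0 ?invr_eq0 ?gt_eqF.
Qed.

End PolarGrid.

Lemma grid_point_outer (R : realType) k alpha' M (r0 : R) (r : 'I_alpha'.+1 -> R)
    (q : 'I_M -> 'cV[R]_k) m :
  r0 != 0 -> r ord_max = r0 -> grid_point r0 r q (ord_max, m) = q m.
Proof. by move=> r0_neq0 r_max; rewrite /grid_point r_max divff // scale1r. Qed.

Theorem propositionA1 (R : realType) (k : nat) (hk : (2 <= k)%N) :
  exists C : nat,
  forall (r0 : R) (M alpha' : nat) (q : 'I_M -> 'cV[R]_k) (r : 'I_alpha'.+1 -> R)
         (p : nat) (e : 'I_p -> 'I_alpha'.+1 * 'I_M),
    0 < r0 ->
    injective q ->
    (forall m, norm2 (q m) = r0 ^+ 2) ->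
    (exists f : 'I_k.-1 -> 'I_M, row_free (\matrix_(i < k.-1) (q (f i))^T)) ->
    (forall a, 0 < r a) ->
    (forall a b : 'I_alpha'.+1, (a < b)%N -> r a < r b) ->
    r ord_max = r0 ->
    bijective e ->
    let x := fun i : 'I_p => grid_point r0 r q (e i) in
    let Tk := fun O : 'M[R]_k => is_rotation O /\ maps_onto x O in
    let T := fun P : 'M[R]_p => exists O, Tk O /\ P = companion x O in
    exists n : nat,
      has_card Tk n /\ has_card T n /\ (n <= C * p ^ k.-1)%N /\
      (forall P, T P -> is_perm_mx P /\ orthogonal_mx P).
Proof.
case: k hk => [|[|n]] // _; exists 1%N.
move=> r0 M alpha' q r p e r0_gt0 q_inj q_norm [f q_free] r_gt0 r_lt r_max [g eK gK] x Tk T.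
have r_inj : injective r.
  move=> a b eq_r; case: (ltngtP a b) => [/r_lt|/r_lt|/val_inj //]; by rewrite eq_r ltxx.
have x_inj : injective x.
  exact: inj_comp (grid_point_inj r0_gt0 q_norm q_inj r_gt0 r_inj) (can_inj eK).
have x_outer m : x (g (ord_max, m)) = q m by rewrite /x gK grid_point_outer ?gt_eqF.
have x_free : row_free (\matrix_i (x (g (ord_max, f i)))^T).
  by congr (row_free _): q_free; apply/row_matrixP => i; rewrite !rowK x_outer.
have [N card_Tk N_le] := has_card_rotations_onto x_free.
exists N; split=> //; split.
  exact: has_card_image (companion_inj_on_rotations_onto x_free) card_Tk.
split; first by rewrite mul1n.
move=> _ [O [[O_rot [_ O_onto]] ->]].
have [s ->] := companion_perm_mx x_inj (rotation_unitmx O_rot) O_onto.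
by split; [apply/is_perm_mxP; exists s | exact: perm_mx_orthogonal].
Qed.
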